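(* Let $S$ be an isolated invariant set for $f$ and let $P=(N,L)$ and $P'=(N',L')$ be filtration pairs for $S$. Then there exist an integer $M(P,P')\ge 0$ and maps $r^k_{P'P}:N_L\to N'_{L'}$, defined for all integers $k\ge M(P,P')$, such that (1) $M(P,P')=M(P',P)$ and (2) $r^k_{PP}=f_P^k$; and such that if $P''=(N'',L'')$ is another filtration pair for $S$ then (3) $M(P,P'')\le M(P,P')+M(P',P'')$ and (4) $r^{k_1+k_2}_{P''P}=r^{k_1}_{P''P'}\circ r^{k_2}_{P'P}$ whenever $k_1\ge M(P',P'')$ and $k_2\ge M(P,P')$.
   Context: Let $X$ be a locally compact metric space, $U\subset X$ open and $f:U\to X$ continuous. A solution through $x$ is a map $\sigma:\mathbb Z\to U$ with $\sigma(0)=x$ and $f(\sigma(n))=\sigma(n+1)$ for all $n$; for $N\subset U$, $\operatorname{Inv} N$ is the set of $x\in N$ admitting a solution through $x$ with all values in $N$. A compact $N\subset U$ is an isolating neighborhood if $\operatorname{Inv} N\subset\operatorname{Int} N$; $S$ is an isolated invariant set if $S=\operatorname{Inv} N$ for some isolating neighborhood $N$. The exit set of $N$ is $N^-=\{x\in N:f(x)\notin\operatorname{Int} N\}$. A filtration pair for an isolated invariant set $S$ is a pair of compact sets $L\subset N$ contained in the interior of the domain of $f$, each the closure of its interior, such that (1) $\operatorname{cl}(N\setminus L)$ is an isolating neighborhood with $\operatorname{Inv}\operatorname{cl}(N\setminus L)=S$; (2) $L$ is a neighborhood of $N^-$ in $N$; (3) $f(L)\cap\operatorname{cl}(N\setminus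 L)=\emptyset$. For a filtration pair $P=(N,L)$, $N_L=N/L$ with $L$ collapsed to the base point $[L]$ (if $L=\emptyset$, $N_L$ is $N$ with a disjoint point $[L]$ adjoined), $p:N\to N_L$ is the quotient map, and the pointed space map $f_P:N_L\to N_L$ is $f_P([L])=[L]$, $f_P(p(x))=p(f(x))$ for $x\in N\setminus L$. *)

From HB Require Import structures.
From mathcomp Require Import all_boot all_order all_algebra.
From mathcomp Require Import all_classical all_reals all_analysis.
Set Implicit Arguments. Unset Strict Implicit. Unset Printing Implicit Defensive.
Import Order.TTheory GRing.Theory Num.Theory.
Local Open Scope classical_set_scope.

(* A map f : U -> X is represented by a total function f : X -> X together
   with the open set U; only its values on U are ever used. *)

Definition Inv {T : Type} (U : set T) (f : T -> T) (N : set T) : set T :=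
  [set x | N x /\ exists s : int -> T,
      s 0%R = x /\ (forall n, U (s n) /\ N (s n)) /\
      (forall n, f (s n) = s (n + 1)%R)].

Definition isolating_nbhd {T : topologicalType} (U : set T) (f : T -> T)
  (N : set T) : Prop :=
  compact N /\ N `<=` U /\ Inv U f N `<=` interior N.

Definition isolated_invariant {T : topologicalType} (U : set T) (f : T -> T)
  (S : set T) : Prop :=
  exists N, isolating_nbhd U f N /\ S = Inv U f N.

Definition exit_set {T : topologicalType} (f : T -> T) (N : set T) : set T :=
  [set x | N x /\ ~ interior N (f x)].

Definition filtration_pair {T : topologicalType} (U : set T) (f : T -> T)
  (S : set T) (P : set T * set T) : Prop :=
  let N := P.1 in let L := P.2 in
  (compact N /\ compact L /\ L `<=` N /\ N `<=` interior U /\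
   closure (interior N) = N /\ closure (interior L) = L) /\
  (isolating_nbhd U f (closure (N `\` L)) /\ Inv U f (closure (N `\` L)) = S) /\
  (* (2) L is a neighborhood of N^- in N *)
  (exists O : set T, open O /\ exit_set f N `<=` O /\ O `&` N `<=` L) /\
  (f @` L) `&` closure (N `\` L) = set0.

(* The pointed space N_L = N/L is represented inside option T:
   the base point [L] is None, and the class of x in N \ L is Some x. *)
Definition inNL {T : Type} (P : set T * set T) (z : option T) : Prop :=
  z = None \/ exists x, [/\ P.1 x, ~ P.2 x & z = Some x].

Definition proj {T : Type} (P : set T * set T) (x : T) : option T :=
  if `[< P.2 x >] then None else Some x.

(* quotient topology: V is open in N_L iff p^{-1}(V) is open in N
   (subspace topology of N in T). *)
Definition NL_open {T : topologicalType} (P : set T * set T)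
  (V : set (option T)) : Prop :=
  exists O : set T, open O /\ [set x | P.1 x /\ V (proj P x)] = O `&` P.1.

Definition pointed_map {T : topologicalType} (P P' : set T * set T)
  (g : option T -> option T) : Prop :=
  [/\ g None = None,
      (forall z, inNL P z -> inNL P' (g z))
    & (forall V, NL_open P' V -> NL_open P (g @^-1` V))].

Definition fP {T : Type} (f : T -> T) (P : set T * set T)
  (z : option T) : option T :=
  match z with None => None | Some x => proj P (f x) end.

From Pilot Require Import Defs.
From HB Require Import structures.
From mathcomp Require Import all_boot all_order all_algebra.
From mathcomp Require Import all_classical all_reals all_analysis.
From mathcomp Require Import zify.
Local Open Scope classical_set_scope.
Set Implicit Arguments. Unset Strict Implicit.

(* Since
   S = Inv cl(N \ L) lies in the open set Int N' \ L', compactness yields a lag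
   w such that every orbit segment of length 2w in cl(N \ L) is in N' \ L' at
   its midpoint (otherwise a limit of bad segments would be a point of S outside
   Int N' \ L'); let m be the least lag that also works with P and Q exchanged.
   For k >= 3m + 2, r^k sends [x] to [f^k x] if the orbit of x stays in N \ L
   up to time k - m and in N' \ L' from time m to k, and to the base point
   otherwise. Leaving N \ L forces a visit to L followed by an exit from
   cl(N \ L), an open condition, which makes r^k continuous. The lag lets such
   itineraries be cut and glued, which gives the composition law, and lags add
   along P, P', P''. *)

Lemma continuous_iter_at (T : topologicalType) (f : T -> T) n x :
  (forall j, (j < n)%N -> {for iter j f x, continuous f}) ->
  {for x, continuous (iter n f)}.
Proof.
elim: n => [_|n IH cf]; first exact: cvg_id.
apply: (@continuous_comp _ _ _ (iter n f) f); last exact: cf.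
by apply: IH => j jn; apply: cf; apply: ltnW.
Qed.

Lemma closed_setI_preimage (T1 T2 : topologicalType) (g : T1 -> T2)
    (D : set T1) (Z : set T2) :
  closed D -> closed Z -> (forall x, D x -> {for x, continuous g}) ->
  closed (D `&` g @^-1` Z).
Proof.
move=> cD cZ cg x clx.
have Dx : D x by apply: cD; apply: (closureS _ clx) => y [].
split=> //; apply: contrapT => nZgx.
have near_nZ := cg x Dx _ (open_nbhs_nbhs (conj (closed_openC cZ) nZgx)).
by have [y [[_ Zgy] nZgy]] := clx _ near_nZ.
Qed.

Lemma nested_compact_meet (T : topologicalType) (C : set T) (K : nat -> set T) :
  compact C -> (forall n, closed (K n)) -> (forall n, K n `<=` C) ->
  (forall n, K n.+1 `<=` K n) -> (forall n, K n !=set0) ->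
  exists y, forall n, K n y.
Proof.
move=> cC clK KC Kdecr K0.
have Kmono n l : (n <= l)%N -> K l `<=` K n.
  elim: l => [|l IH]; first by rewrite leqn0 => /eqP ->.
  by rewrite leq_eqVlt ltnS => /orP [/eqP -> //|/IH nl y /Kdecr /nl].
have FF : ProperFilter (filter_from setT K).
  apply: filter_from_proper => [|i _]; last exact: K0.
  apply: filter_from_filter => [|i j _ _]; first by exists 0%N.
  exists (maxn i j) => // y Ky.
  by split; apply: (Kmono _ (maxn i j)) => //; rewrite ?leq_maxl ?leq_maxr.
have [y [_ clKy]] := cC _ FF (ex_intro2 _ _ 0%N I (KC 0%N)).
exists y => n; apply: (clK n) => B nB.
by apply: clKy nB; exists n.
Qed.

Lemma near_forall_leq (T : Type) (F : set_system T) (p : nat -> T -> Prop) n :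
  Filter F -> (forall i, (i <= n)%N -> \forall z \near F, p i z) ->
  \forall z \near F, forall i, (i <= n)%N -> p i z.
Proof.
move=> FF near_p.
have := @filter_forall T _ (fun i : 'I_n.+1 => p i) F FF (fun i => near_p i (ltn_ord i)).
by apply: filterS => z pz i ni; exact: (pz (Ordinal (ni : i < n.+1))).
Qed.

Section Windows.
Variables (T : topologicalType) (f : T -> T).

Definition core (P : set T * set T) := P.1 `\` P.2.

Definition iso_nbhd (P : set T * set T) := closure (core P).

Lemma core_iso_nbhd P : core P `<=` iso_nbhd P.
Proof. exact: subset_closure. Qed.

Definition window P Q w := forall x,
  (forall i, (i <= 2 * w)%N -> iso_nbhd P (iter i f x)) -> core Q (iter w f x).

Lemma window_at P Q w x j : window P Q w -> (w <= j)%N ->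
  (forall i, (j - w <= i)%N -> (i <= j + w)%N -> iso_nbhd P (iter i f x)) ->
  core Q (iter j f x).
Proof.
move=> win wj isoP; rewrite -(subnKC wj) iterD; apply: win => i iw.
by rewrite -iterD; apply: isoP; lia.
Qed.

Lemma window_core P Q w x lo hi : window P Q w ->
  (forall i, (lo <= i)%N -> (i <= hi)%N -> core P (iter i f x)) ->
  forall j, (lo + w <= j)%N -> (j + w <= hi)%N -> core Q (iter j f x).
Proof.
move=> win coreP j j1 j2; apply: (window_at win); first lia.
by move=> i i1 i2; apply: core_iso_nbhd; apply: coreP; lia.
Qed.

Lemma window_ge P Q w w' : window P Q w -> (w <= w')%N -> window P Q w'.
Proof.
move=> win ww' x isoP; apply: (window_at win) => // i _ i2.
by apply: isoP; lia.
Qed.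

Lemma window_trans P P' P'' w1 w2 :
  window P P' w1 -> window P' P'' w2 -> window P P'' (w1 + w2).
Proof.
move=> win1 win2 x isoP; rewrite addnC iterD; apply: win2 => i i2.
rewrite -iterD; apply: core_iso_nbhd; apply: (window_at win1); first lia.
by move=> l _ l2; apply: isoP; lia.
Qed.

Definition swindow P Q w := window P Q w /\ window Q P w.

Lemma swindow_trans P P' P'' w1 w2 :
  swindow P P' w1 -> swindow P' P'' w2 -> swindow P P'' (w1 + w2).
Proof.
move=> [win1 win1'] [win2 win2']; split; first exact: window_trans win1 win2.
by rewrite addnC; apply: window_trans win2' win1'.
Qed.

(* [lag P Q] is 0 when no symmetric window exists; it is only used when one does. *)
Definition lag P Q : nat :=
  if pselect (exists w, `[< swindow P Q w >]) is left ex then ex_minn ex else 0.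

Lemma lagP P Q : (exists w, swindow P Q w) ->
  swindow P Q (lag P Q) /\ forall w, swindow P Q w -> (lag P Q <= w)%N.
Proof.
move=> [w0 win0]; rewrite /lag; case: pselect => [ex|]; last first.
  by case; exists w0; apply/asboolP.
case: ex_minnP => w /asboolP win wmin; split=> // w' win'.
exact/wmin/asboolP.
Qed.

Lemma lagC P Q : (exists w, swindow P Q w) -> lag P Q = lag Q P.
Proof.
move=> ex; have ex' : exists w, swindow Q P w by case: ex => w [] ? ?; exists w.
have [[win1 win1'] min1] := lagP ex; have [[win2 win2'] min2] := lagP ex'.
by apply/eqP; rewrite eqn_leq min1 ?min2.
Qed.

Lemma lag_triangle P P' P'' :
  (exists w, swindow P P' w) -> (exists w, swindow P' P'' w) ->
  (exists w, swindow P P'' w) -> (lag P P'' <= lag P P' + lag P' P'')%N.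
Proof.
move=> ex1 ex2 ex3; have [_ min3] := lagP ex3.
by apply: min3; apply: swindow_trans (lagP ex1).1 (lagP ex2).1.
Qed.

Definition transit P Q m k x :=
  (forall i, (i <= k - m)%N -> core P (iter i f x)) /\
  (forall i, (m <= i)%N -> (i <= k)%N -> core Q (iter i f x)).

Lemma transit_core_end P Q m k x : (m <= k)%N -> transit P Q m k x ->
  core Q (iter k f x).
Proof. by move=> mk [_ coreQ]; apply: coreQ. Qed.

Section Composition.
Variables (P P' P'' : set T * set T) (m1 m2 m3 k1 k2 : nat).
Hypotheses (win1 : swindow P P' m1) (win2 : swindow P' P'' m2)
  (win3 : swindow P P'' m3) (m3_le : (m3 <= m1 + m2)%N)
  (k2_ge : (3 * m1 + 2 <= k2)%N) (k1_ge : (3 * m2 + 2 <= k1)%N).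

Lemma transit_cat x : transit P P' m1 k2 x -> transit P' P'' m2 k1 (iter k2 f x) ->
  transit P P'' m3 (k1 + k2) x.
Proof.
move=> [coreP coreP'] [coreP'_shift coreP''_shift].
have coreP'_all i : (m1 <= i)%N -> (i <= k1 + k2 - m2)%N -> core P' (iter i f x).
  move=> i1 i2; have [ik|ik] := leqP i k2; first exact: coreP'.
  by rewrite -(subnK (ltnW ik)) iterD; apply: coreP'_shift; lia.
have coreP''_all i : (m1 + m2 <= i)%N -> (i <= k1 + k2)%N -> core P'' (iter i f x).
  move=> i1 i2; have [ik|ik] := leqP i (k1 + k2 - 2 * m2).
    by apply: (window_core win2.1 coreP'_all); lia.
  have k2i : (k2 <= i)%N by lia.
  by rewrite -(subnK k2i) iterD; apply: coreP''_shift; lia.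
have coreP_all i : (0 <= i)%N -> (i <= k1 + k2 - m3)%N -> core P (iter i f x).
  move=> _ i2; have [ik|ik] := leqP i (k2 - m1); first exact: coreP.
  have [ik'|ik'] := leqP i (k1 + k2 - m1 - m2).
    by apply: (window_core win1.2 coreP'_all); lia.
  by apply: (window_core win3.2 coreP''_all); lia.
split=> [i i2|i i1 i2]; first exact: coreP_all.
have [ik|ik] := leqP (m1 + m2) i; first exact: coreP''_all.
by apply: (window_core win3.1 coreP_all); lia.
Qed.

Lemma transit_split x : transit P P'' m3 (k1 + k2) x ->
  transit P P' m1 k2 x /\ transit P' P'' m2 k1 (iter k2 f x).
Proof.
move=> [coreP coreP''].
have coreP_all i : (0 <= i)%N -> (i <= k1 + k2 - m3)%N -> core P (iter i f x).
  by move=> _; apply: coreP.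
have coreP'_all i : (m1 <= i)%N -> (i <= k1 + k2 - m2)%N -> core P' (iter i f x).
  move=> i1 i2; have [ik|ik] := leqP i (k1 + k2 - m3 - m1).
    by apply: (window_core win1.1 coreP_all); lia.
  by apply: (window_core win2.2 coreP''); lia.
split; split=> [i i2|i i1 i2]; rewrite -?iterD.
- by apply: coreP; lia.
- by apply: coreP'_all; lia.
- by apply: coreP'_all; lia.
- by apply: coreP''; lia.
Qed.

End Composition.

End Windows.

Section FiltrationPairs.
Variables (R : realType) (X : metricType R) (U : set X) (f : X -> X) (S : set X).

Section Pair.
Variable P : set X * set X.
Hypothesis fpP : filtration_pair U f S P.

Lemma fp_N_compact : compact P.1. Proof. by case: fpP => [[]]. Qed.

Lemma fp_L_closed : closed P.2.
Proof.
by case: fpP => [[_ [cL _]] _]; apply: compact_closed cL; apply: metric_hausdorff.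
Qed.

Lemma fp_LN : P.2 `<=` P.1. Proof. by case: fpP => [[_ [_ []]]]. Qed.

Lemma fp_NU : P.1 `<=` U.
Proof. by case: fpP => [[_ [_ [_ [NU _]]]]] _ x /NU /interior_subset. Qed.

Lemma fp_iso_nbhdN : iso_nbhd P `<=` P.1.
Proof.
have clN : closed P.1 by apply: compact_closed fp_N_compact; apply: metric_hausdorff.
by move=> x clx; apply: clN; apply: (closureS _ clx) => y [].
Qed.

Lemma fp_iso_nbhd_compact : compact (iso_nbhd P).
Proof. exact: subclosed_compact (@closed_closure _ _) fp_N_compact fp_iso_nbhdN. Qed.

Lemma fp_f_core x : core P x -> P.1 (f x).
Proof.
move=> [Nx nLx]; case: fpP => _ [_ [LO _]]; case: LO => O [_ [exitO ON]].
apply: contrapT => nNfx; apply: nLx; apply: ON; split=> //; apply: exitO.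
by split=> // /interior_subset.
Qed.

Lemma fp_f_L x : P.2 x -> ~ iso_nbhd P (f x).
Proof.
move=> Lx isofx; case: fpP => _ [_ [_ /seteqP [fL0 _]]].
by apply: (fL0 (f x)); split=> //; exists x.
Qed.

Lemma fp_Inv : Defs.Inv U f (iso_nbhd P) = S. Proof. by case: fpP => _ [[_ ->] _]. Qed.

Lemma fp_Inv_interior : Defs.Inv U f (iso_nbhd P) `<=` interior (iso_nbhd P).
Proof. by case: fpP => _ [[[_ [_ InvN]] _] _]. Qed.

Lemma core_or_enters_L x a n : P.1 (iter a f x) -> (a <= n)%N ->
  (forall i, (a <= i)%N -> (i <= n)%N -> core P (iter i f x)) \/
  exists j, [/\ (a <= j)%N, (j <= n)%N,
    forall l, (a <= l)%N -> (l < j)%N -> core P (iter l f x) & P.2 (iter j f x)].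
Proof.
move=> Na an; rewrite -(subnKC an); elim: (n - a)%N => [|d IH].
  rewrite addn0; have [La|nLa] := pselect (P.2 (iter a f x)).
    by right; exists a; split=> // l al la; lia.
  by left=> i ai ia; have -> : i = a by lia.
case: IH => [coreP|[j [aj jd coreP Lj]]]; last by right; exists j; split=> //; lia.
have Nd : P.1 (iter (a + d.+1) f x).
  by rewrite addnS iterS; apply: fp_f_core; apply: coreP; rewrite ?leq_addr.
have [L|nL] := pselect (P.2 (iter (a + d.+1) f x)).
  by right; exists (a + d.+1)%N; split=> //; [lia | move=> l al ld; apply: coreP; lia].
left=> i ai id; have [ile|igt] := leqP i (a + d); first exact: coreP.
by have -> : i = (a + d.+1)%N by lia.
Qed.

Lemma iter_fP_Some x k : core P x ->
  iter k (fP f P) (Some x) =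
  if `[< forall i, (i <= k)%N -> core P (iter i f x) >] then Some (iter k f x)
  else None.
Proof.
move=> coreP; elim: k => [|k IH].
  by rewrite asboolT // => i; rewrite leqn0 => /eqP ->.
rewrite iterS IH; case: asboolP => coreP_k /=; last first.
  by rewrite asboolF // => coreP_k1; apply: coreP_k => i ik; apply: coreP_k1; lia.
rewrite /Defs.proj; case: asboolP => Lk.
  by rewrite asboolF // => coreP_k1; have [] := coreP_k1 k.+1 (leqnn _).
rewrite asboolT // => i; rewrite leq_eqVlt ltnS => /orP [/eqP ->|]; last exact: coreP_k.
by split=> //; apply: fp_f_core; apply: coreP_k.
Qed.

End Pair.

Lemma iter_fP_None P k : iter k (fP f P) None = None.
Proof. by elim: k => //= k ->. Qed.

Definition rmap P Q m k (z : option X) : option X :=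
  if z is Some x then
    if `[< transit f P Q m k x >] then Some (iter k f x) else None
  else None.

Lemma rmap_proj P Q m k y :
  rmap P Q m k (Defs.proj P y) =
  if `[< transit f P Q m k y >] then Some (iter k f y) else None.
Proof.
rewrite /Defs.proj; case: asboolP => //= Ly.
by rewrite asboolF // => [[coreP _]]; have [] := coreP 0%N (leq0n _).
Qed.

Lemma rmap_inNL P Q m k z : (m <= k)%N -> inNL Q (rmap P Q m k z).
Proof.
move=> mk; case: z => [x|] /=; last by left.
case: asboolP => [/(transit_core_end mk) []|]; last by left.
by right; exists (iter k f x).
Qed.

Lemma transit_self P m k x : (2 * m <= k)%N ->
  transit f P P m k x <-> forall i, (i <= k)%N -> core P (iter i f x).
Proof.
move=> mk; split=> [[coreP coreP'] i ik|coreP].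
  by have [|] := leqP i (k - m); [apply: coreP | move=> ?; apply: coreP' => //; lia].
by split=> [i ik|i _ ik]; apply: coreP; lia.
Qed.

Lemma rmap_id P m k z : filtration_pair U f S P -> (2 * m <= k)%N -> inNL P z ->
  rmap P P m k z = iter k (fP f P) z.
Proof.
move=> fpP mk [->|[x [Nx nLx ->]]]; first by rewrite iter_fP_None.
by rewrite (iter_fP_Some fpP) //= (propext (transit_self P x mk)).
Qed.

Lemma rmap_comp P P' P'' m1 m2 m3 k1 k2 z :
  swindow f P P' m1 -> swindow f P' P'' m2 -> swindow f P P'' m3 ->
  (m3 <= m1 + m2)%N -> (3 * m1 + 2 <= k2)%N -> (3 * m2 + 2 <= k1)%N ->
  rmap P P'' m3 (k1 + k2) z = rmap P' P'' m2 k1 (rmap P P' m1 k2 z).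
Proof.
move=> win1 win2 win3 m3_le k2_ge k1_ge; case: z => [x|] //=.
have tcat := transit_cat win1 win2 win3 m3_le k2_ge k1_ge (x := x).
have tsplit := transit_split win1 win2 m3_le k2_ge k1_ge (x := x).
case: (asboolP (transit f P P' m1 k2 x)) => t1 /=; last first.
  by rewrite asboolF // => /tsplit [].
case: (asboolP (transit f P' P'' m2 k1 (iter k2 f x))) => t2; last first.
  by rewrite asboolF // => /tsplit [].
by rewrite asboolT ?iterD //; apply: tcat.
Qed.

End FiltrationPairs.

Section Continuity.
Variables (R : realType) (X : metricType R) (U : set X) (f : X -> X) (S : set X).
Hypotheses (oU : open U) (cf : {within U, continuous f}).

Lemma continuous_at_U x : U x -> {for x, continuous f}.
Proof.
move=> Ux; have := cf; rewrite continuous_open_subspace // => cfU.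
by apply/cfU; rewrite inE.
Qed.

Lemma iter_continuous_at n x : (forall j, (j < n)%N -> U (iter j f x)) ->
  {for x, continuous (iter n f)}.
Proof. by move=> Uorb; apply: continuous_iter_at => j /Uorb /continuous_at_U. Qed.

Lemma near_iter n x (B : set X) : (forall j, (j < n)%N -> U (iter j f x)) ->
  open B -> B (iter n f x) -> \forall z \near x, B (iter n f z).
Proof.
by move=> Uorb oB Bx; apply: (iter_continuous_at Uorb); apply: open_nbhs_nbhs.
Qed.

Variables (P Q : set X * set X) (m k : nat).
Hypotheses (fpP : filtration_pair U f S P) (fpQ : filtration_pair U f S Q)
  (win : swindow f P Q m) (km : (3 * m + 2 <= k)%N).

Lemma transit_U x : transit f P Q m k x -> forall j, (j <= k)%N -> U (iter j f x).
Proof.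
move=> [coreP coreQ] j jk; have [jm|jm] := leqP j (k - m).
  by apply: (fp_NU fpP); case: (coreP j jm).
by apply: (fp_NU fpQ); have [] : core Q (iter j f x) by apply: coreQ; lia.
Qed.

Lemma transit_of_avoid x : P.1 x ->
  (forall i, (i <= k - m)%N -> ~ P.2 (iter i f x)) ->
  (forall i, (m <= i)%N -> (i <= k)%N -> ~ Q.2 (iter i f x)) ->
  transit f P Q m k x.
Proof.
move=> Nx avoidL avoidL'.
have coreP i : (i <= k - m)%N -> core P (iter i f x).
  have [coreP|[j [_ jk _ Lj]]] := core_or_enters_L fpP (a := 0) (n := k - m) Nx (leq0n _).
    exact: coreP.
  by case: (avoidL j jk).
have coreQm : core Q (iter m f x).
  by apply: (window_core (lo := 0) win.1 (fun i _ => coreP i)); lia.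
have mk : (m <= k)%N by lia.
split=> //; have [coreQ|[j [mj jk _ L'j]]] := core_or_enters_L fpQ coreQm.1 mk.
  exact: coreQ.
by case: (avoidL' j mj jk).
Qed.

Lemma transit_near x : transit f P Q m k x ->
  \forall z \near x, P.1 z -> transit f P Q m k z.
Proof.
move=> tx; have [coreP coreQ] := tx.
have avoid (K : set X) i : closed K -> (i <= k)%N -> ~ K (iter i f x) ->
    \forall z \near x, ~ K (iter i f z).
  move=> clK ik nK; apply: near_iter (closed_openC clK) nK => j ji.
  by apply: (transit_U tx); lia.
have avoidL : \forall z \near x, forall i, (i <= k - m)%N -> ~ P.2 (iter i f z).
  apply: near_forall_leq => i ikm.
  by apply: avoid (fp_L_closed fpP) _ (coreP i ikm).2; lia.
have avoidL' : \forall z \near x,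
    forall i, (i <= k)%N -> (m <= i)%N -> ~ Q.2 (iter i f z).
  apply: near_forall_leq => i ik; have [mi|im] := leqP m i.
    by apply: filterS (avoid _ i (fp_L_closed fpQ) ik (coreQ i mi ik).2) => z.
  by apply: nearW => z mi; lia.
apply: filterS (filterI avoidL avoidL') => z [avoidLz avoidL'z] Nz.
by apply: transit_of_avoid => // i mi ik; apply: avoidL'z.
Qed.

(* At some time j <= k the orbit of x is outside a closed set that every
   transit orbit occupies at time j; this is an open condition. *)
Definition escapes x := exists j, [/\ (j <= k)%N,
  forall l, (l < j)%N -> U (iter l f x) &
  ((j <= k - m)%N /\ ~ iso_nbhd P (iter j f x)) \/
  ((m <= j)%N /\ ~ iso_nbhd Q (iter j f x))].

Lemma escapes_near x : escapes x -> \forall z \near x, ~ transit f P Q m k z.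
Proof.
move=> [j [jk Uorb [[jkm nisoP]|[mj nisoQ]]]].
  apply: filterS (near_iter Uorb (closed_openC (@closed_closure _ _)) nisoP).
  by move=> z nisoPz [coreP _]; apply/nisoPz/core_iso_nbhd/coreP.
apply: filterS (near_iter Uorb (closed_openC (@closed_closure _ _)) nisoQ).
by move=> z nisoQz [_ coreQ]; apply/nisoQz/core_iso_nbhd/coreQ.
Qed.

Lemma not_transit_cases x : P.1 x -> ~ transit f P Q m k x ->
  escapes x \/ (Q.2 (iter k f x) /\ forall l, (l < k)%N -> U (iter l f x)).
Proof.
move=> Nx ntx.
have [coreP|[j [_ jk coreP Lj]]] :=
  core_or_enters_L fpP (a := 0) (n := k - m - 1) Nx (leq0n _); last first.
  left; exists j.+1; split; [lia| |left; split; [lia|]].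
  - move=> l; rewrite ltnS leq_eqVlt => /orP [/eqP ->|lj].
      exact/(fp_NU fpP)/(fp_LN fpP).
    by apply: (fp_NU fpP); case: (coreP l (leq0n _) lj).
  - by rewrite iterS; apply: (fp_f_L fpP).
have coreQm : core Q (iter m f x).
  by apply: (window_core (lo := 0) win.1 coreP); lia.
have mk : (m <= k)%N by lia.
have [coreQ|[j [mj jk coreQ L'j]]] := core_or_enters_L fpQ coreQm.1 mk.
  case: ntx; split=> [i ikm|]; last exact: coreQ.
  have [ikm1|ikm1] := leqP i (k - m - 1); first exact: coreP.
  by apply: (window_core win.2 coreQ); lia.
have Uorb l : (l < j)%N -> U (iter l f x).
  move=> lj; have [lkm|lkm] := leqP l (k - m - 1).
    by apply: (fp_NU fpP); case: (coreP l (leq0n _) lkm).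
  by apply: (fp_NU fpQ); have [] : core Q (iter l f x) by apply: coreQ; lia.
have [jk'|jk'] := ltnP j k; last first.
  by right; have -> : k = j by lia.
left; exists j.+1; split=> //; last first.
  by right; split; [lia | rewrite iterS; apply: (fp_f_L fpQ)].
move=> l; rewrite ltnS leq_eqVlt => /orP [/eqP ->|]; last exact: Uorb.
exact/(fp_NU fpQ)/(fp_LN fpQ).
Qed.

Lemma rmap_near (V : set (option X)) (Ob : set X) x : open Ob ->
  (forall z, core Q z -> V (Some z) <-> Ob z) -> (V None -> Q.2 `<=` Ob) ->
  P.1 x -> V (rmap f P Q m k (Defs.proj P x)) ->
  \forall z \near x, P.1 z -> V (rmap f P Q m k (Defs.proj P z)).
Proof.
move=> oO VSome VNone Nx; have mk : (m <= k)%N by lia.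
rewrite rmap_proj; case: asboolP => [tx|ntx] Vx.
  have Okx : Ob (iter k f x) by apply/(VSome _ (transit_core_end mk tx)).
  have nearO := near_iter (fun j jk => transit_U tx (ltnW jk)) oO Okx.
  apply: filterS (filterI (transit_near tx) nearO) => z [tz Okz] Nz.
  have tz' := tz Nz; rewrite rmap_proj asboolT //.
  exact/(VSome _ (transit_core_end mk tz')).
case: (not_transit_cases Nx ntx) => [esc|[L'k Uorb]].
  by apply: filterS (escapes_near esc) => z ntz _; rewrite rmap_proj asboolF.
apply: filterS (near_iter Uorb oO (VNone Vx _ L'k)) => z Okz Nz.
rewrite rmap_proj; case: asboolP => // tz.
exact/(VSome _ (transit_core_end mk tz)).
Qed.

Lemma rmap_continuous V : NL_open Q V -> NL_open P (rmap f P Q m k @^-1` V).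
Proof.
move=> [Ob [oO /seteqP [VO OV]]].
have VOb y : Q.1 y -> V (Defs.proj Q y) <-> Ob y.
  by move=> Ny; split=> [Vy|Oy]; [case: (VO y (conj Ny Vy)) | case: (OV y (conj Oy Ny))].
have VSome z : core Q z -> V (Some z) <-> Ob z.
  by move=> [Nz nLz]; rewrite -(VOb z Nz) /Defs.proj asboolF.
have VNone : V None -> Q.2 `<=` Ob.
  by move=> VN z L'z; apply/(VOb z (fp_LN fpQ L'z)); rewrite /Defs.proj asboolT.
exists (interior [set y | P.1 y -> V (rmap f P Q m k (Defs.proj P y))]).
split; first exact: open_interior.
apply/seteqP; split=> y /=; last first.
  by move=> [Iy Ny]; split=> //; apply: interior_subset Iy Ny.
by move=> [Ny Vy]; split=> //; apply: (rmap_near oO VSome VNone Ny Vy).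
Qed.

End Continuity.

Section WindowExistence.
Variables (R : realType) (X : metricType R) (U : set X) (f : X -> X) (S : set X).
Hypotheses (oU : open U) (cf : {within U, continuous f}).
Variables (P Q : set X * set X).
Hypotheses (fpP : filtration_pair U f S P) (fpQ : filtration_pair U f S Q).

Let iso_nbhdU : iso_nbhd P `<=` U.
Proof. by move=> x /(fp_iso_nbhdN fpP) /(fp_NU fpP). Qed.

Definition orbit_in j := [set x | forall i, (i <= j)%N -> iso_nbhd P (iter i f x)].

Lemma orbit_in_closed j : closed (orbit_in j).
Proof.
elim: j => [|j IH].
  rewrite (_ : orbit_in 0 = iso_nbhd P); first exact: closed_closure.
  by apply/seteqP; split=> x /= => [/(_ 0%N)|isox i]; [apply | rewrite leqn0 => /eqP ->].
rewrite (_ : orbit_in j.+1 = orbit_in j `&` iter j.+1 f @^-1` iso_nbhd P).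
  apply: closed_setI_preimage IH (@closed_closure _ _) _ => x orbx.
  by apply: (iter_continuous_at oU cf) => l lj; apply/iso_nbhdU/orbx.
apply/seteqP; split=> x /= => [orbx|[orbx isox] i].
  by split=> [i ij|]; [apply: orbx; lia | exact: (orbx j.+1)].
by rewrite leq_eqVlt ltnS => /orP [/eqP -> //|]; apply: orbx.
Qed.

Definition midpoints n := iter n f @` orbit_in (2 * n).

Lemma midpoints_closed n : closed (midpoints n).
Proof.
apply: compact_closed; first exact: metric_hausdorff.
apply: continuous_compact.
  apply: continuous_in_subspaceT => x; rewrite inE => orbx.
  by apply: (iter_continuous_at oU cf) => l ln; apply/iso_nbhdU/orbx; lia.
have sub : orbit_in (2 * n) `<=` iso_nbhd P by move=> x /(_ 0%N (leq0n _)).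
exact: subclosed_compact (@orbit_in_closed _) (fp_iso_nbhd_compact fpP) sub.
Qed.

Lemma midpoints_decr n : midpoints n.+1 `<=` midpoints n.
Proof.
move=> _ [x orbx <-]; exists (f x); last by rewrite iterSr.
by move=> i i2n; rewrite -iterSr; apply: orbx; lia.
Qed.

Lemma midpoints_iso_nbhd n : midpoints n `<=` iso_nbhd P.
Proof. by move=> _ [x orbx <-]; apply: orbx; lia. Qed.

Lemma midpoints_forward y n : (forall l, midpoints l y) -> iso_nbhd P (iter n f y).
Proof. by move=> my; have [x orbx <-] := my n; rewrite -iterD; apply: orbx; lia. Qed.

Lemma midpoints_backward y : (forall n, midpoints n y) ->
  exists z, (forall n, midpoints n z) /\ f z = y.
Proof.
move=> my; pose K n := midpoints n `&` (iso_nbhd P `&` f @^-1` [set y]).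
have clK n : closed (K n).
  apply: closedI; first exact: midpoints_closed.
  have cly : closed [set y].
    exact/accessible_closed_set1/hausdorff_accessible/metric_hausdorff.
  have cfx x : iso_nbhd P x -> {for x, continuous f}.
    by move=> /iso_nbhdU; apply: continuous_at_U.
  exact: closed_setI_preimage (@closed_closure _ _) cly cfx.
have neK n : K n !=set0.
  have [x orbx fx] := my n.+1; exists (iter n f x); split; last split.
  - by exists x => // i i2n; apply: orbx; lia.
  - by apply: orbx; lia.
  - by rewrite /= -fx.
have [z Kz] := nested_compact_meet (fp_iso_nbhd_compact fpP) clK
  (fun n z Kz => Kz.2.1) (fun n z Kz => conj (midpoints_decr Kz.1) Kz.2) neK.
by exists z; split=> [n|]; [case: (Kz n) | case: (Kz 0%N) => _ []].
Qed.

Lemma midpoints_Inv y : (forall n, midpoints n y) -> Defs.Inv U f (iso_nbhd P) y.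
Proof.
move=> my.
have back w : exists z, (forall n, midpoints n w) ->
    (forall n, midpoints n z) /\ f z = w.
  have [mw|nmw] := pselect (forall n, midpoints n w); last by exists w.
  by have [z zP] := midpoints_backward mw; exists z.
have [g gP] := choice back.
have mg n l : midpoints l (iter n g y).
  by elim: n l => [//|n IH] l; rewrite iterS; apply: (gP _ IH).1.
have fg n : f (iter n.+1 g y) = iter n g y by rewrite iterS; apply: (gP _ (mg n)).2.
pose s (i : int) := match i with Posz n => iter n f y | Negz n => iter n.+1 g y end.
split; first exact: midpoints_iso_nbhd (my 0%N).
exists s; split=> //; split.
  have isos i : iso_nbhd P (s i).
    case: i => n /=; first exact: midpoints_forward.
    exact: midpoints_iso_nbhd (mg n.+1 0%N).
  by move=> i; split; [apply/iso_nbhdU/isos | apply: isos].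
case=> [n|[|n]].
- by have -> : (Posz n + 1 = Posz n.+1)%R by rewrite -addn1.
- exact: (fg 0%N).
- rewrite (_ : (Negz n.+1 + 1 = Negz n)%R); first exact: fg.
  by rewrite !NegzE -addn1 PoszD GRing.opprD GRing.addrK.
Qed.

Lemma exists_window : exists w, window f P Q w.
Proof.
apply: contrapT => nwin.
have bad w : exists x, orbit_in (2 * w) x /\ ~ core Q (iter w f x).
  apply: contrapT => nbad; apply: nwin; exists w => x isoPx.
  by apply: contrapT => ncore; apply: nbad; exists x.
pose V := Q.1° `&` ~` Q.2.
have oV : open V.
  by apply: openI; [exact: open_interior | exact/closed_openC/(fp_L_closed fpQ)].
have SV : S `<=` V.
  rewrite -(fp_Inv fpQ) => y Invy; split.
    exact: (interiorS (fp_iso_nbhdN fpQ) (fp_Inv_interior fpQ Invy)).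
  move=> L'y; case: Invy => _ [s [s0 [sN sf]]]; apply: (fp_f_L fpQ L'y).
  by rewrite -s0 sf; apply: (sN 1%R).2.
pose K n := midpoints n `&` ~` V.
have clK n : closed (K n).
  by apply: closedI; [exact: midpoints_closed | exact: open_closedC].
have neK n : K n !=set0.
  have [x [orbx ncore]] := bad n; exists (iter n f x); split; first by exists x.
  by move=> [/interior_subset Nx nLx]; apply: ncore.
have [y Ky] := nested_compact_meet (fp_iso_nbhd_compact fpP) clK
  (fun n z Kz => midpoints_iso_nbhd Kz.1)
  (fun n z Kz => conj (midpoints_decr Kz.1) Kz.2) neK.
have : S y by rewrite -(fp_Inv fpP); apply: midpoints_Inv => n; case: (Ky n).
by move=> /SV Vy; case: (Ky 0%N).
Qed.

End WindowExistence.

Lemma exists_swindow (R : realType) (X : metricType R) (U : set X) (f : X -> X)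
    (S : set X) (P Q : set X * set X) :
  open U -> {within U, continuous f} ->
  filtration_pair U f S P -> filtration_pair U f S Q -> exists w, swindow f P Q w.
Proof.
move=> oU cf fpP fpQ.
have [w1 win1] := exists_window oU cf fpP fpQ.
have [w2 win2] := exists_window oU cf fpQ fpP.
by exists (maxn w1 w2); split; [apply: window_ge win1 _ | apply: window_ge win2 _];
  rewrite ?leq_maxl ?leq_maxr.
Qed.

Theorem mainTheorem6 (R : realType) (X : metricType R) (U : set X)
  (f : X -> X) (S : set X) :
  locally_compact [set: X] -> open U -> {within U, continuous f} ->
  isolated_invariant U f S ->
  exists (M : set X * set X -> set X * set X -> nat)
         (r : set X * set X -> set X * set X -> nat -> option X -> option X),
    (* r P' P k : N_L -> N'_{L'} is a map of pointed spaces for k >= M(P,P') *)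
    (forall P P', filtration_pair U f S P -> filtration_pair U f S P' ->
       forall k, (M P P' <= k)%N -> pointed_map P P' (r P' P k)) /\
    (* (1) *)
    (forall P P', filtration_pair U f S P -> filtration_pair U f S P' ->
       M P P' = M P' P) /\
    (* (2) *)
    (forall P, filtration_pair U f S P ->
       forall k, (M P P <= k)%N ->
       forall z, inNL P z -> r P P k z = iter k (fP f P) z) /\
    (* (3) *)
    (forall P P' P'', filtration_pair U f S P -> filtration_pair U f S P' ->
       filtration_pair U f S P'' ->
       (M P P'' <= M P P' + M P' P'')%N) /\
    (* (4) *)
    (forall P P' P'', filtration_pair U f S P -> filtration_pair U f S P' ->
       filtration_pair U f S P'' ->
       forall k1 k2, (M P' P'' <= k1)%N -> (M P P' <= k2)%N ->
       forall z, inNL P z ->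
         r P'' P (k1 + k2) z = r P'' P' k1 (r P' P k2 z)).
Proof.
move=> _ oU cf _.
have ex P Q : filtration_pair U f S P -> filtration_pair U f S Q ->
    exists w, swindow f P Q w.
  exact: exists_swindow.
have lag_win P Q fpP fpQ := (lagP (ex P Q fpP fpQ)).1.
have lag_tri P P' P'' fp fp' fp'' :=
  lag_triangle (ex P P' fp fp') (ex P' P'' fp' fp'') (ex P P'' fp fp'').
exists (fun P Q => 3 * lag f P Q + 2)%N, (fun Q P k => rmap f P Q (lag f P Q) k).
split; [|split; [|split; [|split]]] => /=.
- move=> P Q fpP fpQ k km; split=> //; first by move=> z _; apply: rmap_inNL; lia.
  exact: (rmap_continuous oU cf fpP fpQ (lag_win P Q fpP fpQ) km).
- by move=> P Q fpP fpQ; rewrite (lagC (ex P Q fpP fpQ)).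
- by move=> P fpP k km z Pz; apply: (rmap_id fpP) => //; lia.
- by move=> P P' P'' fp fp' fp''; have := lag_tri P P' P'' fp fp' fp''; lia.
- move=> P P' P'' fp fp' fp'' k1 k2 k1_ge k2_ge z _.
  exact: rmap_comp (lag_win _ _ fp fp') (lag_win _ _ fp' fp'') (lag_win _ _ fp fp'')
    (lag_tri _ _ _ fp fp' fp'') k2_ge k1_ge.
Qed.
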